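(* In the strategic matching-queue model of the context, under the ACR policy it is a dominant strategy for a specialized agent of type $i\in\mathcal{L}\setminus\{0\}$ to join queue $i$; i.e. in equilibrium $\sigma^{\mathrm{ACR}}_{ii}=1$ for all $i\in\mathcal{L}\setminus\{0\}$.
   Context: Types $\mathcal{L}=\{0,\dots,\ell\}$; agents of type $i$ arrive Poisson at rate $\lambda_i>0$, jobs of type $j$ Poisson at rate $\mu_j>0$, independently; type $0$ agents can fulfill all jobs, type $i\ge1$ (specialized) agents only type $i$ jobs; unmatched jobs are lost; waiting agents abandon at exponential rate $\theta>0$. Agent types are private. The ACR policy offers queues $\{0,1,\dots,\ell\}$; a type $0$ job is offered only to queue $0$, a type $j\ge1$ job first to queue $j$ and then to queue $0$; within a queue the job is offered to uniformly random agents (without replacement), each accepting iff compatible (rejection takes no time). Each arriving type $i$ agent joins queue $q$ with probability $\sigma_{iq}$ and never switches; agents choose queues to minimize expected steady-state waiting time until match. Joining queue $i$ being a dominant strategy means that for every profile of the other agents, the expected waiting time of a type $i$ agent in queue $i$ is no larger than in any other queue. *)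

From HB Require Import structures.
From mathcomp Require Import all_boot all_order all_algebra.
From mathcomp Require Import all_classical all_reals.
From mathcomp Require Import ereal esum.
Set Implicit Arguments. Unset Strict Implicit. Unset Printing Implicit Defensive.
Import Order.TTheory GRing.Theory Num.Theory.
Local Open Scope classical_set_scope.
Local Open Scope ring_scope.

(* Types / queues are 'I_l.+1 = {0,...,l}; type 0 is the flexible type,
   queue 0 the flexible queue.                                            *)

(* Population state: x (a, q) = number of waiting agents of type a in queue q. *)
Definition state (l : nat) := {ffun 'I_l.+1 * 'I_l.+1 -> nat}.

Definition inc_st l (x : state l) (a q : 'I_l.+1) : state l :=
  [ffun p => (x p + (p == (a, q)))%N].
Definition dec_st l (x : state l) (a q : 'I_l.+1) : state l :=
  [ffun p => (x p - (p == (a, q)))%N].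

Section Model.
Context {R : realType} {l : nat}.
Variables (lam mu : 'I_l.+1 -> R) (theta : R) (sigma : 'I_l.+1 -> 'I_l.+1 -> R).

(* agent of type a can fulfil job of type j *)
Definition compat (a j : 'I_l.+1) : bool := (a == ord0) || (a == j).

Definition ncomp (x : state l) (j q : 'I_l.+1) : nat :=
  (\sum_(b < l.+1) (if compat b j then x (b, q) else 0))%N.

(* ACR: a type j job is offered to queue j; a type j >= 1 job is then
   offered to queue 0 if queue j contains no compatible agent.           *)
Definition reaches (x : state l) (j q : 'I_l.+1) : bool :=
  (q == j) || ((q == ord0) && (ncomp x j j == 0%N)).

(* probability that an arriving type j job is matched to a (type a, queue q)
   agent: uniform among the compatible agents of the first queue (in offer
   order) that contains a compatible agent.                               *)
Definition pmatch (x : state l) (j a q : 'I_l.+1) : R :=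
  if [&& compat a j, reaches x j q & (0 < ncomp x j q)%N]
  then (x (a, q))%:R / (ncomp x j q)%:R else 0.

Definition mrate (x : state l) (a q : 'I_l.+1) : R :=
  \sum_(j < l.+1) mu j * pmatch x j a q.

Definition Qenv (x y : state l) : R :=
  \sum_(a < l.+1) \sum_(q < l.+1)
    ((if y == inc_st x a q then lam a * sigma a q else 0) +
     (if (0 < x (a, q))%N && (y == dec_st x a q)
      then theta * (x (a, q))%:R + mrate x a q else 0)).

Definition stationary (pi : state l -> R) : Prop :=
  [/\ forall x, 0 <= pi x,
      (\esum_(x in [set: state l]) (pi x)%:E = 1)%E &
      forall y, ((pi y * \sum_(a < l.+1) \sum_(q < l.+1)
                   (lam a * sigma a q +
                    (if (0 < y (a, q))%N then theta * (y (a, q))%:R + mrate y a q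
                     else 0)))%:E
                 = \esum_(x in [set: state l]) (pi x * Qenv x y)%:E)%E].

(* ---------- chain seen by a tagged agent of type i in queue q ----------
   x = state of the OTHER agents; the tagged agent is one of the
   x (i,q) + 1 agents of type i in queue q of the full state inc_st x i q. *)
Definition share (x : state l) (i q a b : 'I_l.+1) : R :=
  if (a, b) == (i, q) then (x (i, q))%:R / (x (i, q)).+1%:R else 1.

Definition Qtag (i q : 'I_l.+1) (x y : state l) : R :=
  \sum_(a < l.+1) \sum_(b < l.+1)
    ((if y == inc_st x a b then lam a * sigma a b else 0) +
     (if (0 < x (a, b))%N && (y == dec_st x a b)
      then theta * (x (a, b))%:R + mrate (inc_st x i q) a b * share x i q a b
      else 0)).

Definition tag_exit (i q : 'I_l.+1) (x : state l) : R :=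
  theta + mrate (inc_st x i q) i q / (x (i, q)).+1%:R.

Definition out_tag (i q : 'I_l.+1) (x : state l) : R :=
  \sum_(a < l.+1) \sum_(b < l.+1)
    (lam a * sigma a b +
     (if (0 < x (a, b))%N
      then theta * (x (a, b))%:R + mrate (inc_st x i q) a b * share x i q a b
      else 0)) + tag_exit i q x.

(* first-step equations for the expected remaining time of the tagged agent *)
Definition wait_eqns (i q : 'I_l.+1) (h : state l -> \bar R) : Prop :=
  (forall x, (0 <= h x)%E) /\
  forall x, (h x * (out_tag i q x)%:E =
             1 + \esum_(y in [set: state l]) (Qtag i q x y)%:E * h y)%E.

(* expected time until the tagged agent leaves the system, as a function of
   the state of the others: the minimal nonnegative solution.              *)
Definition exp_wait_fun (i q : 'I_l.+1) (h : state l -> \bar R) : Prop :=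
  wait_eqns i q h /\ forall g, wait_eqns i q g -> forall x, (h x <= g x)%E.

(* expected steady-state waiting time of an arriving agent (PASTA) *)
Definition exp_wait (pi : state l -> R) (h : state l -> \bar R) : \bar R :=
  (\esum_(x in [set: state l]) (pi x)%:E * h x)%E.

Definition join_own_queue_best (i : 'I_l.+1) : Prop :=
  forall (q : 'I_l.+1) (pi : state l -> R) (h_own h_q : state l -> \bar R),
    stationary pi -> exp_wait_fun i i h_own -> exp_wait_fun i q h_q ->
    (exp_wait pi h_own <= exp_wait pi h_q)%E.

End Model.

Definition valid_profile {R : realType} {l : nat}
  (sigma : 'I_l.+1 -> 'I_l.+1 -> R) : Prop :=
  (forall a q, 0 <= sigma a q) /\ (forall a, \sum_(q < l.+1) sigma a q = 1).

From Pilot Require Import Defs.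
From HB Require Import structures.
From mathcomp Require Import all_boot all_order all_algebra.
From mathcomp Require Import all_classical all_reals.
From mathcomp Require Import ereal esum.
From mathcomp Require Import ring lra.
Import Order.TTheory GRing.Theory Num.Theory.
Local Open Scope classical_set_scope.
Local Open Scope ring_scope.

(* Let h_q be the expected remaining wait of a tagged type i agent in queue q,
   as a function of the state of the other agents: the minimal nonnegative
   solution of the first-step equations of the chain it sees.  A minimal
   solution lies below every nonnegative supersolution.  A specialised agent
   only serves type i jobs, so only those jobs notice where it waits.  In its
   own queue it receives every type i job that no other agent takes, and it
   leaves the other agents a smaller share of these jobs than anywhere else;
   hence h_q is a supersolution of the equations for queue i, h_i <= h_q
   pointwise, and averaging over the stationary distribution concludes. *)

Section PointMasses.
Context {R : realType} {T : choiceType}.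
Local Open Scope ereal_scope.

Lemma esum_point_mass (z : T) (c : R) (g : T -> \bar R) :
  (0 <= c)%R -> 0 <= g z ->
  \esum_(y in [set: T]) ((if y == z then c else 0)%:E * g y) = c%:E * g z.
Proof.
move=> c_ge0 gz_ge0.
transitivity (\esum_(y in [set: T]) (if y \in [set z] then c%:E * g y else 0)).
  by apply: eq_esum => y _; rewrite in_set1; case: eqP => [->|]; rewrite ?mul0e.
by rewrite -esum_mkcond esum_set1 // mule_ge0.
Qed.

Lemma esum_point_masses (I : finType) (z : I -> T) (c : I -> R) (g : T -> \bar R) :
  (forall k, 0 <= c k)%R -> (forall y, 0 <= g y) ->
  \esum_(y in [set: T]) (\sum_k (if y == z k then c k else 0))%:E * g y =
  \sum_k (c k)%:E * g (z k).
Proof.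
move=> c_ge0 g_ge0.
have ind_ge0 y k : (0 <= if y == z k then c k else 0)%R by case: ifP.
have distr y : (\sum_k (if y == z k then c k else 0))%:E * g y =
                \sum_k (if y == z k then c k else 0)%:E * g y.
  by rewrite -sumEFin ge0_sume_distrl // => k _; rewrite lee_fin.
rewrite (eq_esum (fun y _ => distr y)).
rewrite esum_sum => [|y k _ _]; last by rewrite mule_ge0 ?lee_fin.
by apply: eq_bigr => k _; rewrite esum_point_mass.
Qed.

End PointMasses.

Section FirstStepEquations.
Context {R : realType} {T : choiceType}.
Variables (Q : T -> T -> R) (o : T -> R).
Hypotheses (Q_ge0 : forall x y, 0 <= Q x y) (o_gt0 : forall x, 0 < o x).
Local Open Scope ereal_scope.

Definition jump_sum (f : T -> \bar R) (x : T) : \bar R :=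
  \esum_(y in [set: T]) (Q x y)%:E * f y.

Definition first_step_sol (f : T -> \bar R) : Prop :=
  (forall x, 0 <= f x) /\ forall x, f x * (o x)%:E = 1 + jump_sum f x.

Definition first_step_supersol (g : T -> \bar R) : Prop :=
  (forall x, 0 <= g x) /\ forall x, 1 + jump_sum g x <= g x * (o x)%:E.

Lemma le_jump_sum (f g : T -> \bar R) : (forall x, 0 <= f x) ->
  (forall x, f x <= g x) -> forall x, jump_sum f x <= jump_sum g x.
Proof. by move=> f_ge0 le_fg x; apply: le_esum => y _; rewrite lee_wpmul2l ?lee_fin. Qed.

Lemma jump_sum_ge0 (f : T -> \bar R) : (forall x, 0 <= f x) -> forall x, 0 <= jump_sum f x.
Proof. by move=> f_ge0 x; apply: esum_ge0 => y _; rewrite mule_ge0 ?lee_fin. Qed.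

Lemma mule_oK (z : \bar R) (x : T) : z * (o x)%:E * ((o x)^-1)%:E = z.
Proof. by rewrite -muleA -EFinM mulfV ?mule1 ?gt_eqF. Qed.

Lemma mule_oVK (z : \bar R) (x : T) : z * ((o x)^-1)%:E * (o x)%:E = z.
Proof. by rewrite -muleA -EFinM mulVf ?mule1 ?gt_eqF. Qed.

(* The pointwise infimum of all supersolutions is a fixed point of
   [f |-> (1 + jump_sum f) / o], by monotonicity (Knaster-Tarski). *)
Lemma first_step_sol_le_supersol (g : T -> \bar R) : first_step_supersol g ->
  exists2 f, first_step_sol f & forall x, f x <= g x.
Proof.
move=> g_super.
pose fs x := ereal_inf [set f x | f in first_step_supersol].
pose next x := (1 + jump_sum fs x) * ((o x)^-1)%:E.
have fs_le f x : first_step_supersol f -> fs x <= f x.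
  by move=> f_super; apply: ereal_inf_lbound; exists f.
have fs_ge0 x : 0 <= fs x.
  by apply/ereal_infP => _ [f [f_ge0 _] <-].
have oV_ge0 x : 0 <= ((o x)^-1)%:E by rewrite lee_fin invr_ge0 ltW.
have next_ge0 x : 0 <= next x by rewrite mule_ge0 ?adde_ge0 ?jump_sum_ge0.
have next_le_fs x : next x <= fs x.
  apply/ereal_infP => _ [f [f_ge0 f_super] <-].
  rewrite -(mule_oK (f x) x); apply: lee_wpmul2r => //; apply: le_trans _ (f_super x).
  by apply: leeD2l; apply: le_jump_sum => // y; apply: fs_le.
have next_super : first_step_supersol next.
  by split=> // x; rewrite [next x]/next mule_oVK; apply/leeD2l/le_jump_sum.
have fsE x : fs x = next x by apply: le_anti; rewrite next_le_fs fs_le.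
exists fs; last by move=> x; apply: fs_le.
by split=> // x; rewrite fsE /next mule_oVK.
Qed.

Lemma minimal_sol_le_supersol {h g : T -> \bar R} :
  (forall f, first_step_sol f -> forall x, h x <= f x) ->
  first_step_supersol g -> forall x, h x <= g x.
Proof.
move=> h_min /first_step_sol_le_supersol [f f_sol le_fg] x.
exact: le_trans (h_min f f_sol x) (le_fg x).
Qed.

End FirstStepEquations.

Section QueueModel.
Context {R : realType} {l : nat}.
Implicit Types (x : state l) (a b j q : 'I_l.+1).

Lemma ncomp_inc_st x a q j b :
  ncomp (inc_st x a q) j b = (ncomp x j b + (compat a j && (b == q)))%N.
Proof.
have -> : nat_of_bool (compat a j && (b == q)) =
          (\sum_(c < l.+1) (if compat c j then nat_of_bool ((c, b) == (a, q)) else 0))%N.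
  rewrite (bigD1 a) //= big1 => [|c ca]; last by rewrite xpair_eqE (negPf ca); case: ifP.
  by rewrite xpair_eqE eqxx addn0; case: compat.
by rewrite /ncomp -big_split; apply: eq_bigr => c _; rewrite ffunE; case: ifP.
Qed.

Lemma pmatch_ge0 x j a b : 0 <= pmatch x j a b :> R.
Proof. by rewrite /pmatch; case: ifP => // _; rewrite divr_ge0. Qed.

Lemma share_ge0 x i q a b : 0 <= share x i q a b :> R.
Proof. by rewrite /share; case: ifP => // _; rewrite divr_ge0. Qed.

Lemma sum_pmatch_queue x j b :
  \sum_a pmatch x j a b = (reaches x j b && (0 < ncomp x j b)%N)%:R :> R.
Proof.
rewrite /pmatch; case: (boolP (reaches x j b && _)) => [/andP[_ pos]|_]; last first.
  by apply: big1 => a _; rewrite andbF.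
transitivity ((ncomp x j b)%:R / (ncomp x j b)%:R : R).
  rewrite {2}/ncomp natr_sum mulr_suml.
  by apply: eq_bigr => a _; rewrite andbT; case: compat; rewrite ?mul0r.
by rewrite mulfV // pnatr_eq0 -lt0n.
Qed.

Lemma sum_pmatch x j :
  \sum_a \sum_b pmatch x j a b =
  ((0 < ncomp x j j)%N || (0 < ncomp x j ord0)%N)%:R :> R.
Proof.
rewrite exchange_big /=; under eq_bigr => b _ do rewrite sum_pmatch_queue.
have [->|j_neq0] := eqVneq j ord0.
  rewrite orbb (bigD1 ord0) //= big1 ?addr0 => [|b /negPf b_neq0]; last first.
    by rewrite /reaches b_neq0.
  by rewrite /reaches ?eqxx.
rewrite (bigD1 j) //= (bigD1 ord0) 1?eq_sym //= big1 ?addr0 => [|b /andP[/negPf bj /negPf b0]];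
  last by rewrite /reaches bj b0.
rewrite /reaches eqxx (eq_sym ord0 j) (negPf j_neq0) /=.
by case: (posnP (ncomp x j j)) => [_|_] /=; rewrite ?add0r ?addr0.
Qed.

Lemma compat_refl j : compat j j.
Proof. by rewrite /compat eqxx orbT. Qed.

Section TaggedAgent.
Context {mu : 'I_l.+1 -> R} {i : 'I_l.+1}.
Hypothesis i_neq0 : i != ord0.

Lemma compat_specialized j : j != i -> compat i j = false.
Proof. by move=> ji; rewrite /compat (negPf i_neq0) eq_sym (negPf ji). Qed.

Section OthersState.
Variable x : state l.

(* [pmatch] on the full state counts the tagged agent among the (i, q) agents;
   [pmatch_other] only counts the others. *)
Definition pmatch_other q j a b : R := pmatch (inc_st x i q) j a b * share x i q a b.

Definition ptag q : R := pmatch (inc_st x i q) i i q / (x (i, q)).+1%:R.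

Lemma pmatch_otherE q j a b : pmatch_other q j a b =
  if [&& compat a j, reaches (inc_st x i q) j b & (0 < ncomp (inc_st x i q) j b)%N]
  then (x (a, b))%:R / (ncomp (inc_st x i q) j b)%:R else 0.
Proof.
rewrite /pmatch_other /pmatch; case: ifP => _; last by rewrite mul0r.
rewrite /share ffunE; case: eqP => [[-> ->]|_]; last by rewrite addn0 mulr1.
by rewrite addn1 mulrC mulrA divfK // pnatr_eq0.
Qed.

Lemma pmatch_other_ge0 q j a b : 0 <= pmatch_other q j a b.
Proof. by rewrite mulr_ge0 ?pmatch_ge0 ?share_ge0. Qed.

Lemma pmatch_other_eq0 q j a b : x (a, b) = 0%N -> pmatch_other q j a b = 0.
Proof. by move=> xab0; rewrite pmatch_otherE xab0 mul0r; case: ifP. Qed.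

Lemma pmatch_other_specialized q j a b : j != i -> pmatch_other q j a b = pmatch x j a b.
Proof.
move=> ji; rewrite pmatch_otherE /pmatch /reaches !ncomp_inc_st compat_specialized //.
by rewrite !addn0.
Qed.

Definition other_jobs_rate a b : R := \sum_(j | j != i) mu j * pmatch x j a b.

Lemma mrate_shareE q a b : mrate mu (inc_st x i q) a b * share x i q a b =
  mu i * pmatch_other q i a b + other_jobs_rate a b.
Proof.
rewrite /mrate mulr_suml (bigD1 i) //=; congr (_ + _); first by rewrite -mulrA.
apply: eq_bigr => j ji.
by rewrite -mulrA -/(pmatch_other q j a b) pmatch_other_specialized.
Qed.

Lemma tag_mrateE q : mrate mu (inc_st x i q) i q / (x (i, q)).+1%:R = mu i * ptag q.
Proof.
rewrite /mrate (bigD1 i) //= big1 ?addr0 => [|j ji]; first by rewrite mulrA.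
by rewrite /pmatch compat_specialized // mulr0.
Qed.

Lemma sum_pmatch_other q :
  \sum_a \sum_b pmatch_other q i a b + ptag q = \sum_a \sum_b pmatch (inc_st x i q) i a b.
Proof.
rewrite !pair_bigA /= [RHS](bigD1 (i, q)) //= [in LHS](bigD1 (i, q)) //= addrAC.
congr (_ + _); last by apply: eq_bigr => -[a b] abiq; rewrite /pmatch_other /share (negPf abiq) mulr1.
rewrite /pmatch_other /ptag /share eqxx -natr1.
by field; rewrite natr1 pnatr_eq0.
Qed.

Lemma ptag_ge0 q : 0 <= ptag q.
Proof. by rewrite divr_ge0 ?pmatch_ge0. Qed.

Lemma match_prob_own : \sum_a \sum_b pmatch_other i i a b + ptag i = 1.
Proof. by rewrite sum_pmatch_other sum_pmatch ncomp_inc_st compat_refl eqxx addn1. Qed.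

Lemma match_prob_le1 q : \sum_a \sum_b pmatch_other q i a b + ptag q <= 1.
Proof. by rewrite sum_pmatch_other sum_pmatch lern1 leq_b1. Qed.

Lemma pmatch_other_le q a b : q != i -> pmatch_other i i a b <= pmatch_other q i a b.
Proof.
move=> qi; rewrite [X in X <= _]pmatch_otherE.
case: ifP => [/and3P[ca reach _]|_]; last exact: pmatch_other_ge0.
have {reach} -> : b = i.
  by move: reach; rewrite /reaches ncomp_inc_st compat_refl eqxx addn1 andbF orbF => /eqP.
rewrite pmatch_otherE /reaches ca eqxx !ncomp_inc_st compat_refl eqxx (eq_sym i q) (negPf qi).
rewrite addn1 addn0 /=; case: (posnP (ncomp x i i)) => [n0|n_gt0].
  suff -> : x (a, i) = 0%N by rewrite mul0r.
  by apply/eqP; rewrite -leqn0 -n0 /ncomp (bigD1 a) //= ca leq_addr.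
by rewrite ler_wpM2l // lef_pV2 ?posrE ?ltr0n // ler_nat.
Qed.

End OthersState.

Section TaggedChain.
Context {lam : 'I_l.+1 -> R} {theta : R} {sigma : 'I_l.+1 -> 'I_l.+1 -> R}.
Hypotheses (lam_gt0 : forall a, 0 < lam a) (mu_gt0 : forall j, 0 < mu j)
  (theta_gt0 : 0 < theta) (sigma_ge0 : forall a q, 0 <= sigma a q).

Local Notation Qtag q := (Qtag lam mu theta sigma i q).
Local Notation out_tag q := (out_tag lam mu theta sigma i q).

Definition dep_rate q x a b : R :=
  theta * (x (a, b))%:R + mrate mu (inc_st x i q) a b * share x i q a b.

Lemma dep_rate_if q x a b :
  (if (0 < x (a, b))%N then dep_rate q x a b else 0) = dep_rate q x a b.
Proof.
case: (posnP (x (a, b))) => // xab0.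
rewrite /dep_rate xab0 mulr0 add0r /mrate mulr_suml big1 // => j _.
by rewrite -mulrA -/(pmatch_other x q j a b) pmatch_other_eq0 ?mulr0.
Qed.

Lemma dep_rateE q x a b : dep_rate q x a b =
  theta * (x (a, b))%:R + other_jobs_rate x a b + mu i * pmatch_other x q i a b.
Proof. by rewrite /dep_rate mrate_shareE //; ring. Qed.

Lemma arrival_rate_ge0 a b : 0 <= lam a * sigma a b.
Proof. by rewrite mulr_ge0 // ltW. Qed.

Lemma dep_rate_ge0 q x a b : 0 <= dep_rate q x a b.
Proof.
rewrite dep_rateE !addr_ge0 //.
- by rewrite mulr_ge0 ?ler0n ?ltW.
- by apply: sumr_ge0 => j _; rewrite mulr_ge0 ?pmatch_ge0 ?ltW ?mu_gt0.
- by rewrite mulr_ge0 ?pmatch_other_ge0 ?ltW ?mu_gt0.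
Qed.

Lemma QtagE q x y : Qtag q x y = \sum_a \sum_b
  ((if y == inc_st x a b then lam a * sigma a b else 0) +
   (if y == dec_st x a b then dep_rate q x a b else 0)).
Proof.
apply: eq_bigr => a _; apply: eq_bigr => b _; congr (_ + _).
by rewrite -[in RHS]dep_rate_if; case: (0 < _)%N; case: (y == _).
Qed.

Lemma Qtag_ge0 q x y : 0 <= Qtag q x y.
Proof.
rewrite QtagE; apply: sumr_ge0 => a _; apply: sumr_ge0 => b _.
by rewrite addr_ge0 //; case: ifP; rewrite ?arrival_rate_ge0 ?dep_rate_ge0.
Qed.

Lemma out_tagE q x : out_tag q x =
  \sum_a \sum_b (lam a * sigma a b + dep_rate q x a b) + (theta + mu i * ptag x q).
Proof.
rewrite /Defs.out_tag /tag_exit tag_mrateE //; congr (_ + _).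
by apply: eq_bigr => a _; apply: eq_bigr => b _; rewrite dep_rate_if.
Qed.

Lemma out_tag_gt0 q x : 0 < out_tag q x.
Proof.
rewrite out_tagE; apply: ltr_wpDl.
  apply: sumr_ge0 => a _; apply: sumr_ge0 => b _.
  by rewrite addr_ge0 ?arrival_rate_ge0 ?dep_rate_ge0.
by apply: ltr_pwDl; rewrite // mulr_ge0 ?ptag_ge0 ?ltW ?mu_gt0.
Qed.

Definition next_sum q x (g : state l -> R) : R := \sum_a \sum_b
  (lam a * sigma a b * g (inc_st x a b) + dep_rate q x a b * g (dec_st x a b)).

Lemma jump_sum_Qtag q x (g : state l -> R) : (forall y, 0 <= g y) ->
  jump_sum (Qtag q) (fun y => (g y)%:E) x = (next_sum q x g)%:E.
Proof.
move=> g_ge0.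
pose arrive (p : 'I_l.+1 * 'I_l.+1) := lam p.1 * sigma p.1 p.2.
pose depart (p : 'I_l.+1 * 'I_l.+1) := dep_rate q x p.1 p.2.
have QtagEp y : ((Qtag q x y)%:E * (g y)%:E =
    (\sum_p (if y == inc_st x p.1 p.2 then arrive p else 0))%:E * (g y)%:E +
    (\sum_p (if y == dec_st x p.1 p.2 then depart p else 0))%:E * (g y)%:E)%E.
  by rewrite -!EFinM -EFinD QtagE pair_bigA big_split /= mulrDl.
have arrive_ge0 p : 0 <= arrive p by apply: arrival_rate_ge0.
have depart_ge0 p : 0 <= depart p by apply: dep_rate_ge0.
have term_ge0 (c : 'I_l.+1 * 'I_l.+1 -> R) z y : (forall p, 0 <= c p) ->
    (0 <= (\sum_p (if y == z p then c p else 0))%:E * (g y)%:E)%E.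
  by move=> c_ge0; rewrite -EFinM lee_fin mulr_ge0 ?sumr_ge0 // => p _; case: ifP.
rewrite /jump_sum (eq_esum (fun y _ => QtagEp y)) esumD;
  try by move=> y _; apply: term_ge0.
rewrite !esum_point_masses // /next_sum pair_bigA -!sumEFin -big_split /=.
by apply: eq_bigr => p _; rewrite -!EFinM -EFinD.
Qed.

Lemma own_queue_supersol q x (g : state l -> R) : q != i -> (forall y, 0 <= g y) ->
  g x * out_tag q x = 1 + next_sum q x g -> 1 + next_sum i x g <= g x * out_tag i x.
Proof.
move=> qi g_ge0.
pose other_rate a b := theta * (x (a, b))%:R + other_jobs_rate x a b.
pose base := \sum_a \sum_b
  (lam a * sigma a b * g (inc_st x a b) + other_rate a b * g (dec_st x a b)).
pose rest := \sum_a \sum_b (lam a * sigma a b + other_rate a b) + theta.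
pose to_others q' := \sum_a \sum_b pmatch_other x q' i a b * g (dec_st x a b).
pose match_prob q' := \sum_a \sum_b pmatch_other x q' i a b + ptag x q'.
have next_sumE q' : next_sum q' x g = base + mu i * to_others q'.
  rewrite /base /to_others mulr_sumr -big_split; apply: eq_bigr => a _ /=.
  by rewrite mulr_sumr -big_split; apply: eq_bigr => b _ /=; rewrite dep_rateE /other_rate; ring.
have out_tagE' q' : out_tag q' x = rest + mu i * match_prob q'.
  rewrite out_tagE; suff -> : \sum_a \sum_b (lam a * sigma a b + dep_rate q' x a b) =
            \sum_a \sum_b (lam a * sigma a b + other_rate a b) +
            mu i * \sum_a \sum_b pmatch_other x q' i a b.
    by rewrite /rest /match_prob; ring.
  rewrite mulr_sumr -big_split; apply: eq_bigr => a _ /=.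
  by rewrite mulr_sumr -big_split; apply: eq_bigr => b _ /=; rewrite dep_rateE /other_rate; ring.
have le_to_others : mu i * to_others i <= mu i * to_others q.
  apply: ler_wpM2l; first exact: ltW.
  apply: ler_sum => a _; apply: ler_sum => b _.
  by apply: ler_wpM2r; rewrite ?pmatch_other_le.
have le_match_prob : g x * (mu i * match_prob q) <= g x * (mu i * 1).
  apply: ler_wpM2l; first exact: g_ge0.
  by apply: ler_wpM2l; [exact: ltW | exact: match_prob_le1].
rewrite !next_sumE !out_tagE' [match_prob i]match_prob_own // => eq_q.
rewrite mulrDr in eq_q le_match_prob *; lra.
Qed.

Local Notation exp_wait_fun q := (exp_wait_fun lam mu theta sigma i q).

(* Abandonment alone makes the tagged agent leave at rate at least theta. *)
Lemma exp_wait_fun_le_inv {q h} : exp_wait_fun q h -> forall x, (h x <= theta^-1%:E)%E.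
Proof.
case=> _ h_min; apply: (minimal_sol_le_supersol _ _ (Qtag_ge0 q) (out_tag_gt0 q) h_min).
split=> [x|x]; first by rewrite lee_fin invr_ge0 ltW.
rewrite (jump_sum_Qtag q x (fun _ => theta^-1)) => [|_]; last by rewrite invr_ge0 ltW.
rewrite -EFinM lee_fin /next_sum out_tagE.
have -> : \sum_a \sum_b (lam a * sigma a b * theta^-1 + dep_rate q x a b * theta^-1) =
          theta^-1 * \sum_a \sum_b (lam a * sigma a b + dep_rate q x a b).
  rewrite mulr_sumr; apply: eq_bigr => a _.
  by rewrite mulr_sumr; apply: eq_bigr => b _; ring.
have : 0 <= theta^-1 * (mu i * ptag x q).
  by apply: mulr_ge0 (mulr_ge0 (ltW (mu_gt0 i)) (ptag_ge0 x q)); rewrite invr_ge0 ltW.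
have : theta^-1 * theta = 1 by rewrite mulVf ?gt_eqF.
rewrite !mulrDr; lra.
Qed.

Lemma exp_wait_fun_own_le {q h_own h_q} : exp_wait_fun i h_own -> exp_wait_fun q h_q ->
  forall x, (h_own x <= h_q x)%E.
Proof.
move=> [_ own_min]; have [-> [q_eqns _] | qi q_sol] := eqVneq q i; first exact: own_min _ q_eqns.
have [h_q_ge0 h_q_eq] : first_step_sol (Qtag q) (out_tag q) h_q := q_sol.1.
pose g y := fine (h_q y).
have g_ge0 y : 0 <= g y by rewrite fine_ge0.
have h_q_fin y : h_q y = (g y)%:E.
  rewrite /g fineK // ge0_fin_numE //.
  exact: le_lt_trans (exp_wait_fun_le_inv q_sol y) (ltry _).
have h_qE : h_q = (fun y => (g y)%:E) := funext h_q_fin.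
apply: (minimal_sol_le_supersol _ _ (Qtag_ge0 i) (out_tag_gt0 i) own_min).
rewrite h_qE; split=> [y|y]; first by rewrite lee_fin.
rewrite jump_sum_Qtag // -EFinM lee_fin; apply: (own_queue_supersol _ _ _ qi g_ge0).
by apply: EFin_inj; rewrite EFinM -h_q_fin h_q_eq h_qE jump_sum_Qtag.
Qed.

End TaggedChain.
End TaggedAgent.
End QueueModel.

Theorem lemma2 (R : realType) (l : nat) (lam mu : 'I_l.+1 -> R) (theta : R)
  (hlam : forall i, 0 < lam i) (hmu : forall j, 0 < mu j) (htheta : 0 < theta) :
  forall sigma : 'I_l.+1 -> 'I_l.+1 -> R, valid_profile sigma ->
  forall i : 'I_l.+1, i != ord0 ->
    join_own_queue_best lam mu theta sigma i.
Proof.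
move=> sigma [sigma_ge0 _] i i_neq0 q pi h_own h_q [pi_ge0 _ _] own_sol q_sol.
apply: le_esum => x _; apply: lee_wpmul2l; first by rewrite lee_fin.
exact: (exp_wait_fun_own_le i_neq0 hlam hmu htheta sigma_ge0 own_sol q_sol).
Qed.
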